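(* Let $(X,m)$, $X=\{x_1,\ldots,x_n\}\subset\mathbb{R}^N$, be a central configuration with nonzero masses, exponent $a\neq0$, nonzero total mass $\mu_0$, and codimension $c$, and let $\lambda\in\mathbb{R}$ be such that $\sum_{i\neq j}m_iS_{ij}\overrightarrow{x_jx_i}=\overrightarrow{O}$ for all $j$, where $S_{ij}=s_{ij}^a-\lambda/\mu_0$ for $i\neq j$. Define $S_{jj}=-\frac{1}{m_j}\sum_{i\neq j}m_iS_{ij}$ and the vectors $C_j=(m_1S_{1j},\ldots,m_nS_{nj})\in\mathbb{R}^n$. Then for any $k,l\ge0$ with $k+l=c+1$, every $(c+1)\times(c+1)$ minor of any $n\times(c+1)$ matrix whose columns are $k$ of the vectors $C_j$ and $l$ vectors of $\mathbb{W}_0(X)$ vanishes. In particular, every $(c+1)\times(c+1)$ minor of the $n\times n$ matrix $(S_{ij})$ is zero.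
   Context: $s_{ij}=\overrightarrow{x_ix_j}^2$. A central configuration has accelerations $\overrightarrow{\gamma}_j=-\sum_{i\neq j}m_is_{ij}^a\overrightarrow{x_ix_j}$ such that, for some vector $\overrightarrow{\gamma}_O$, point $x_O$ and real $\lambda$, $\overrightarrow{\gamma}_j-\overrightarrow{\gamma}_O=\lambda\overrightarrow{x_Ox_j}$ for all $j$; for $\mu_0\neq0$ these equations take the form given in the claim. The codimension of $X$ is $(n-1)-d$ with $d$ the dimension of the affine hull of $X$. $\mathbb{W}_0(X)$ is the space of weight vectors $(w_i)$ with $\sum_iw_i\overrightarrow{px_i}=\overrightarrow{O}$ for all points $p$. *)

From HB Require Import structures.
From mathcomp Require Import all_boot all_order all_algebra.
From mathcomp Require Import reals exp.
Set Implicit Arguments. Unset Strict Implicit. Unset Printing Implicit Defensive.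
Import Order.TTheory GRing.Theory Num.Theory.
Local Open Scope ring_scope.

Section CC.
Variables (R : realType) (n N : nat).
Implicit Types (x : 'I_n -> 'rV[R]_N) (m : 'I_n -> R).

Definition sqd x (i j : 'I_n) : R := \sum_(k < N) (x j 0 k - x i 0 k) ^+ 2.

Definition mu0 m : R := \sum_(i < n) m i.

Definition accel m (a : R) x (j : 'I_n) : 'rV[R]_N :=
  - \sum_(i < n | i != j) (m i * (sqd x i j) `^ a) *: (x j - x i).

Definition central_config m (a : R) x : Prop :=
  exists (gO xO : 'rV[R]_N) (lam : R),
    forall j, accel m a x j - gO = lam *: (x j - xO).

Definition Soff m (a lam : R) x (i j : 'I_n) : R :=
  (sqd x i j) `^ a - lam / mu0 m.

Definition Smat m (a lam : R) x : 'M[R]_n :=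
  \matrix_(i, j) (if i == j then
                    - (m j)^-1 * \sum_(k < n | k != j) m k * Soff m a lam x k j
                  else Soff m a lam x i j).

Definition Cvec m (a lam : R) x (j : 'I_n) : 'cV[R]_n :=
  \col_i (m i * Smat m a lam x i j).

Definition inW0 x (w : 'cV[R]_n) : Prop :=
  forall p : 'rV[R]_N, \sum_(i < n) w i 0 *: (x i - p) = 0.

(* dimension of the affine hull = dimension of the span of all x_j - x_i *)
Definition affdim x : nat :=
  \dim (<< [seq x j - x i | i <- enum 'I_n, j <- enum 'I_n] >>%VS).

Definition codim x : nat := (n.-1 - affdim x)%N.

End CC.

(* Every column C_j and every element of W_0(X) is a weight vector w with
   sum_i w_i = 0 and sum_i w_i x_i = 0: for C_j this is the equilibrium
   equation at x_j, thanks to the choice of S_jj.  Such weights form the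
   kernel of w |-> sum_i w_i x_i restricted to the hyperplane sum_i w_i = 0,
   whose image contains every x_j - x_i; by rank-nullity their space has
   dimension at most (n - 1) - d = c.  Hence any c + 1 of these vectors are
   linearly dependent and all (c + 1)-minors of a matrix having them as
   columns vanish.  A (c + 1)-minor of (S_ij) is such a minor of the matrix
   with columns C_j, up to the nonzero factor prod m_i over the chosen rows. *)

From HB Require Import structures.
From mathcomp Require Import all_boot all_order all_algebra.
From mathcomp Require Import reals exp.
Set Implicit Arguments. Unset Strict Implicit. Unset Printing Implicit Defensive.
Import Order.TTheory GRing.Theory Num.Theory.
Local Open Scope ring_scope.

Lemma free_cols_of_det_rowsub (F : fieldType) (m c : nat)
    (M : 'M[F]_(m, c)) (f : 'I_c -> 'I_m) :
  \det (rowsub f M) != 0 -> free [tuple (col q M)^T | q < c].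
Proof.
move=> detM_neq0; apply/freeP => k sum_k0 q.
set v : 'cV[F]_c := \col_p k p.
have Mv0 : M *m v = 0.
  apply: trmx_inj; rewrite trmx_mul trmx0 mulmx_sum_row -[RHS]sum_k0.
  by apply: eq_bigr => p _; rewrite nth_mktuple tr_col !mxE.
have unitM : rowsub f M \in unitmx by rewrite unitmxE unitfE.
have /matrixP/(_ q 0) : v = 0.
  by rewrite -(mulKmx unitM v) mul_rowsub_mx Mv0 rowsubE mulmx0 mulmx0.
by rewrite !mxE.
Qed.

Lemma det_rowsub_eq0_of_cols_in (F : fieldType) (m c : nat)
    (U : {vspace 'rV[F]_m}) (M : 'M[F]_(m, c)) (f : 'I_c -> 'I_m) :
  (\dim U < c)%N -> (forall q, (col q M)^T \in U) -> \det (rowsub f M) = 0.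
Proof.
move=> dimU_lt colsU; apply/eqP; apply: contraTT dimU_lt.
move=> /free_cols_of_det_rowsub/eqP dim_cols; rewrite -leqNgt.
rewrite -[X in (X <= _)%N](size_tuple [tuple (col q M)^T | q < c]) -dim_cols.
by apply/dimvS/span_subvP => _ /mapP[q _ ->]; apply: colsU.
Qed.

Section BalancedWeights.
Variables (R : realType) (n N : nat) (x : 'I_n -> 'rV[R]_N).

Definition total_weight : 'Hom('rV[R]_n, 'M[R]_1) :=
  linfun (mulmxr (const_mx 1)).

Definition weighted_sum : 'Hom('rV[R]_n, 'rV[R]_N) :=
  linfun (mulmxr (\matrix_i x i)).

Definition balanced_weights : {vspace 'rV[R]_n} :=
  (lker total_weight :&: lker weighted_sum)%VS.

Lemma total_weightE (w : 'rV[R]_n) : total_weight w = (\sum_i w 0 i)%:M.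
Proof.
rewrite lfunE /=; apply/matrixP => i j; rewrite !ord1 !mxE.
by apply: eq_bigr => k _; rewrite !mxE mulr1.
Qed.

Lemma weighted_sumE (w : 'rV[R]_n) : weighted_sum w = \sum_i w 0 i *: x i.
Proof.
by rewrite lfunE /= mulmx_sum_row; apply: eq_bigr => i _; rewrite rowK.
Qed.

Lemma mem_balanced_weights (w : 'rV[R]_n) :
  \sum_i w 0 i = 0 -> \sum_i w 0 i *: x i = 0 -> w \in balanced_weights.
Proof.
move=> total0 sum0.
by rewrite memv_cap !memv_ker total_weightE weighted_sumE total0 sum0 raddf0 !eqxx.
Qed.

Lemma dim_lker_total_weight : (0 < n)%N -> \dim (lker total_weight) = n.-1.
Proof.
move=> n_gt0; have := limg_ker_dim total_weight fullv.
rewrite capfv dimvf /dim /= mul1n.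
have img_le1 : (\dim (total_weight @: fullv) <= 1)%N.
  by rewrite (leq_trans (dimvS (subvf _))) // dimvf.
have img_gt0 : (0 < \dim (total_weight @: fullv))%N.
  pose e : 'rV[R]_n := delta_mx 0 (Ordinal n_gt0).
  have e_total : total_weight e = 1%:M.
    rewrite total_weightE (bigD1 (Ordinal n_gt0)) //= mxE !eqxx addrC big1 ?add0r //.
    by move=> i /negbTE i_neq; rewrite mxE i_neq.
  rewrite lt0n dimv_eq0; apply: contraNneq (matrix_nonzero1 R 0) => img0.
  by rewrite -e_total -memv0 -img0 memv_img ?memvf.
have img1 : \dim (total_weight @: fullv) = 1%N by apply/anti_leq/andP.
by rewrite img1 addn1 => /(congr1 predn).
Qed.

Lemma affdim_le_dim_weighted_sum :
  (affdim x <= \dim (weighted_sum @: lker total_weight))%N.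
Proof.
apply/dimvS/span_subvP => _ /allpairsP[[i j] [_ _ ->]] /=.
have -> : x j - x i = weighted_sum (delta_mx 0 j - delta_mx 0 i).
  by rewrite lfunE /= mulmxBl -!rowE !rowK.
apply: memv_img; rewrite memv_ker lfunE /= mulmxBl -!rowE !row_const.
by rewrite subrr.
Qed.

Lemma dim_balanced_weights : (0 < n)%N -> (\dim balanced_weights <= codim x)%N.
Proof.
move=> n_gt0; have := limg_ker_dim weighted_sum (lker total_weight).
have := affdim_le_dim_weighted_sum.
rewrite dim_lker_total_weight // /codim /balanced_weights.
by move=> affdim_le <-; rewrite -addnBA ?leq_addr.
Qed.

Lemma balanced_weights_of_equilibrium (w : 'rV[R]_n) (j : 'I_n) :
  w 0 j = - \sum_(i < n | i != j) w 0 i ->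
  \sum_(i < n | i != j) w 0 i *: (x i - x j) = 0 ->
  w \in balanced_weights.
Proof.
move=> wj equilibrium; apply: mem_balanced_weights.
  by rewrite (bigD1 j) //= wj addNr.
rewrite (bigD1 j) //= wj scaleNr scaler_suml addrC -sumrB -[RHS]equilibrium.
by apply: eq_bigr => i _; rewrite scalerBr.
Qed.

Lemma balanced_weights_of_W0 (w : 'cV[R]_n) :
  (0 < N)%N -> inW0 x w -> w^T \in balanced_weights.
Proof.
move=> N_gt0 w_in; have wT i : w^T 0 i = w i 0 by rewrite mxE.
have sum0 : \sum_i w i 0 *: x i = 0.
  by rewrite -[RHS](w_in 0); apply: eq_bigr => i _; rewrite subr0.
apply: mem_balanced_weights; last by under eq_bigr do rewrite wT.
under eq_bigr do rewrite wT.
have : \sum_i w i 0 *: (x i - const_mx 1) = - ((\sum_i w i 0) *: const_mx 1).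
  by rewrite (eq_bigr _ (fun i _ => scalerBr _ _ _)) sumrB sum0 sub0r scaler_suml.
rewrite w_in => /eqP; rewrite eq_sym oppr_eq0 => /eqP/rowP/(_ (Ordinal N_gt0)).
by rewrite !mxE mulr1.
Qed.

End BalancedWeights.

Lemma Cvec_balanced (R : realType) (n N : nat) (x : 'I_n -> 'rV[R]_N)
    (m : 'I_n -> R) (a lam : R) (j : 'I_n) :
  m j != 0 ->
  \sum_(i < n | i != j) (m i * Soff m a lam x i j) *: (x i - x j) = 0 ->
  (Cvec m a lam x j)^T \in balanced_weights x.
Proof.
move=> mj_neq0 equilibrium; apply: (balanced_weights_of_equilibrium (j := j)).
  rewrite !mxE eqxx mulrA mulrN mulfV // mulN1r; congr (- _).
  by apply: eq_bigr => i /negbTE i_neq; rewrite !mxE i_neq.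
rewrite -[RHS]equilibrium; apply: eq_bigr => i /negbTE i_neq.
by rewrite !mxE i_neq.
Qed.

Lemma rowsub_Cvec_cols (R : realType) (n N c : nat) (x : 'I_n -> 'rV[R]_N)
    (m : 'I_n -> R) (a lam : R) (f g : 'I_c -> 'I_n) :
  rowsub f (\matrix_(i, q) Cvec m a lam x (g q) i 0)
  = diag_mx (\row_p m (f p)) *m mxsub f g (Smat m a lam x).
Proof. by rewrite mul_diag_mx; apply/matrixP => i j; rewrite !mxE. Qed.

Theorem mainTheorem16 (R : realType) (n N : nat)
    (x : 'I_n -> 'rV[R]_N) (m : 'I_n -> R) (a lam : R) :
  (0 < N)%N ->
  injective x ->
  (forall i, m i != 0) ->
  a != 0 ->
  mu0 m != 0 ->
  central_config m a x ->
  (forall j : 'I_n,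
     \sum_(i < n | i != j) (m i * Soff m a lam x i j) *: (x i - x j) = 0) ->
  (forall M : 'M[R]_(n, (codim x).+1),
     (forall q, (exists j, col q M = Cvec m a lam x j) \/ inW0 x (col q M)) ->
     forall f : 'I_(codim x).+1 -> 'I_n, injective f ->
       \det (rowsub f M) = 0)
  /\
  (forall f g : 'I_(codim x).+1 -> 'I_n, injective f -> injective g ->
     \det (mxsub f g (Smat m a lam x)) = 0).
Proof.
move=> N_gt0 _ m_neq0 _ _ _ equilibrium.
have minors_eq0 (M : 'M[R]_(n, (codim x).+1)) :
    (forall q, (exists j, col q M = Cvec m a lam x j) \/ inW0 x (col q M)) ->
    forall f : 'I_(codim x).+1 -> 'I_n, injective f -> \det (rowsub f M) = 0.
  move=> cols f _; have n_gt0 := leq_ltn_trans (leq0n _) (ltn_ord (f ord0)).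
  apply: (det_rowsub_eq0_of_cols_in (U := balanced_weights x)).
    by rewrite ltnS dim_balanced_weights.
  move=> q; case: (cols q) => [[j ->] | /balanced_weights_of_W0]; last exact.
  exact: Cvec_balanced.
split=> // f g f_inj _.
pose M : 'M[R]_(n, (codim x).+1) := \matrix_(i, q) Cvec m a lam x (g q) i 0.
have colM q : col q M = Cvec m a lam x (g q) by apply/colP => i; rewrite !mxE.
have diag_neq0 : \prod_i (\row_p m (f p)) 0 i != 0.
  by apply/prodf_neq0 => i _; rewrite mxE.
have /eqP := minors_eq0 M (fun q => or_introl (ex_intro _ (g q) (colM q))) f f_inj.
by rewrite /M rowsub_Cvec_cols det_mulmx det_diag mulf_eq0 (negPf diag_neq0) orFb => /eqP.
Qed.
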